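(* There is a universal constant $C>0$ such that the following holds. Let $\delta\in(0,1]$, $k\geq 12/\delta^2$, $m\geq 4$, and let $T=(t_{ij})$ be an $m\times k$ real matrix. Then for any $y\in S^{k-1}$ there is a coordinate projection $P:\mathbb{R}^k\to\mathbb{R}^k$ with $\mathrm{rank}\,P\leq\delta k$ such that $$C^{-1}\delta^2\min_{\ell\leq m}|Ty|_\ell\leq\frac{\max_{i,j}|t_{ij}|}{\sqrt{k}}+\textstyle\max^{(\lfloor m/4\rfloor)}_{\ell\in[m]}|TP(y)|_\ell.$$
   Context: A coordinate projection is the orthogonal projection onto $\mathrm{span}\{e_j\}_{j\in J}$ for some subset $J$ of coordinates. For $v\in\mathbb{R}^m$, $|v|\in\mathbb{R}^m_+$ is the vector of absolute values of the coordinates, and $|v|_\ell$ its $\ell$-th coordinate. For a non-negative sequence $(a_\ell)_{\ell\in J}$ and $k\in\mathbb{N}$, $\max^{(k)}_{\ell\in J}a_\ell$ denotes its $k$-th largest element ($0$ if $k>|J|$). *)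

From HB Require Import structures.
From mathcomp Require Import all_boot all_order all_algebra.
From mathcomp Require Import reals.
Set Implicit Arguments. Unset Strict Implicit. Unset Printing Implicit Defensive.
Import Order.TTheory GRing.Theory Num.Theory.
Local Open Scope ring_scope.

Definition coordproj (R : ringType) (k : nat) (J : {set 'I_k}) (y : 'cV[R]_k) : 'cV[R]_k :=
  \col_j (if j \in J then y j 0 else 0).

Definition absv (R : numDomainType) (m : nat) (v : 'cV[R]_m) : 'cV[R]_m :=
  \col_l `|v l 0|.

(* kth_max r v = r-th largest coordinate of v (r >= 1), 0 if r > m. *)
Definition kth_max (R : realDomainType) (m : nat) (r : nat) (v : 'cV[R]_m) : R :=
  nth 0 (sort (fun a b : R => b <= a) [seq v l 0 | l <- enum 'I_m]) r.-1.

(* minimum of the coordinates of v (meaningful when m >= 1). *)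
Definition min_coord (R : realDomainType) (m : nat) (v : 'cV[R]_m) : R :=
  let s := [seq v l 0 | l <- enum 'I_m] in foldr Num.min (head 0 s) s.

Definition max_abs_entry (R : realDomainType) (m k : nat) (T : 'M[R]_(m, k)) : R :=
  \big[Num.max/0]_(i < m) \big[Num.max/0]_(j < k) `|T i j|.

Definition on_sphere (R : realDomainType) (k : nat) (y : 'cV[R]_k) : Prop :=
  \sum_(j < k) y j 0 ^+ 2 = 1.

From HB Require Import structures.
From mathcomp Require Import all_boot all_order all_algebra.
From mathcomp Require Import reals.
From mathcomp.algebra_tactics Require Import ring lra.
From mathcomp Require Import zify.

(* Let a = min_l |(Ty)_l| and t = d^2 a / 2^14.  If t <= max |t_ij| / sqrt k, J = {} works,
   so assume the entries of T are small.  Put the at most d k / 2 coordinates with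
   y_j^2 >= 2 / (d k) into a set B and keep each other coordinate independently with
   probability d / 32, giving a random set S.  Since (Ty)_l = b_l + sum_(j \notin B) t_lj y_j
   with b_l the contribution of B, one of the selector sums sum_(j in S) t_lj y_j and
   b_l + sum_(j in S) t_lj y_j has mean at least d a / 2^7 in absolute value.  If its variance
   is small, Chebyshev shows that it exceeds t with probability 3/4; otherwise the summands
   t_lj y_j are small against the variance, the fourth moment is controlled by the second,
   and Paley-Zygmund gives probability 8/25 for each of the two sums.  Averaging over the
   rows, and since |S| > d k / 2 has probability at most 3/250 by Chebyshev, some outcome
   has |S| <= d k / 2 and one of the two events in at least m/4 rows: take J = S or
   J = B :|: S.  Expectations over the selectors are computed exactly, by recursion on
   their number. *)

Set Implicit Arguments.
Unset Strict Implicit.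
Unset Printing Implicit Defensive.

Import Order.TTheory GRing.Theory Num.Theory.
Local Open Scope ring_scope.

Local Notation "''1' b" := (nat_of_bool b)%:R (at level 8, b at level 2, format "''1' b").

Section PointwiseBounds.
Variable R : realFieldType.
Implicit Types mu t z theta lam u : R.

Lemma indicator_ge_cheb mu t z : 0 < mu ^+ 2 -> 4 * t ^+ 2 <= mu ^+ 2 ->
  1 - 4 / mu ^+ 2 * (z - mu) ^+ 2 <= '1(t ^+ 2 <= z ^+ 2).
Proof.
move=> mu_gt0 t_le; have [_|zt] /= := leP (t ^+ 2) (z ^+ 2); last first.
  rewrite subr_le0 mulrAC ler_pdivlMr // mul1r.
  have [mu_ge0|mu_lt0] := lerP 0 mu.
    have : 2 * z < mu by rewrite ltNge; apply/negP => ?; nra.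
    nra.
  have : mu < 2 * z by rewrite ltNge; apply/negP => ?; nra.
  nra.
by rewrite lerBlDr lerDl mulr_ge0 ?sqr_ge0 ?divr_ge0 ?ltW.
Qed.

Lemma indicator_ge_pz theta lam z : 0 <= theta -> 0 <= lam ->
  2 * lam * (z - theta) - lam ^+ 2 * z ^+ 2 <= '1(theta <= z).
Proof.
move=> theta_ge0 lam_ge0; have := sqr_ge0 (1 - lam * z).
have := mulr_ge0 lam_ge0 theta_ge0; have := sqr_ge0 (lam * z).
by have [|] /= := leP theta z; nra.
Qed.

Lemma indicator_le_sq u z : 0 < u -> '1(u < z) <= z ^+ 2 / u ^+ 2.
Proof.
move=> u_gt0; have [uz|_] /= := ltP u z.
  by rewrite ler_pdivlMr ?exprn_gt0 // mul1r; nra.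
by rewrite divr_ge0 ?sqr_ge0.
Qed.

Lemma mean_dichotomy (p a b S : R) : 0 < p -> p <= 1 -> 0 < a -> a ^+ 2 <= (b + S) ^+ 2 ->
  (p * a) ^+ 2 <= 16 * (p * S) ^+ 2 \/ (p * a) ^+ 2 <= 16 * (b + p * S) ^+ 2.
Proof.
move=> p_gt0 p_le1 a_gt0 abS.
have [|lt1] := lerP ((p * a) ^+ 2) (16 * (p * S) ^+ 2); first by left.
have [|lt2] := lerP ((p * a) ^+ 2) (16 * (b + p * S) ^+ 2); first by right.
have pa_ge0 : 0 <= p * a by rewrite mulr_ge0 ?ltW.
have [S_lo S_hi] : - (p * a) < 4 * (p * S) /\ 4 * (p * S) < p * a.
  by split; rewrite ltNge; apply/negP => ?; nra.
have [bS_lo bS_hi] : - (p * a) < 4 * (b + p * S) /\ 4 * (b + p * S) < p * a.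
  by split; rewrite ltNge; apply/negP => ?; nra.
have : - a < 4 * (b + S) /\ 4 * (b + S) < a by split; nra.
case=> ? ?; nra.
Qed.
End PointwiseBounds.

Section BernoulliExpectation.
Variables (R : realFieldType) (p : R).

(* Expectation of [f] when the first [n] entries of its argument are independent
   Bernoulli([p]) selectors. *)
Fixpoint Ebern (n : nat) (f : seq bool -> R) : R :=
  if n is n'.+1 then
    p * Ebern n' (fun s => f (true :: s)) + (1 - p) * Ebern n' (fun s => f (false :: s))
  else f [::].

Lemma eq_Ebern n f g : f =1 g -> Ebern n f = Ebern n g.
Proof.
elim: n f g => [|n IHn] f g fg /=; first exact: fg.
by congr (_ * _ + _ * _); apply: IHn => s; apply: fg.
Qed.

Lemma Ebern_cst n c : Ebern n (fun=> c) = c.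
Proof. by elim: n => [|n IHn] //=; rewrite IHn; ring. Qed.

Lemma EbernD n f g : Ebern n (fun s => f s + g s) = Ebern n f + Ebern n g.
Proof. by elim: n f g => [|n IHn] f g //=; rewrite !IHn; ring. Qed.

Lemma EbernZ n a f : Ebern n (fun s => a * f s) = a * Ebern n f.
Proof. by elim: n f => [|n IHn] f //=; rewrite !IHn; ring. Qed.

Lemma Ebern_sum n (I : Type) (r : seq I) (P : pred I) (F : I -> seq bool -> R) :
  Ebern n (fun s => \sum_(i <- r | P i) F i s) = \sum_(i <- r | P i) Ebern n (F i).
Proof.
elim: r => [|i r IHr].
  rewrite big_nil -[RHS](Ebern_cst n); apply: eq_Ebern => s; exact: big_nil.
transitivity (Ebern n (fun s => (if P i then F i s else 0) + \sum_(j <- r | P j) F j s)).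
  by apply: eq_Ebern => s; rewrite big_cons; case: (P i); rewrite ?add0r.
by rewrite EbernD IHr big_cons; case: (P i); rewrite ?Ebern_cst ?add0r.
Qed.

Lemma Ebern_affine n a b f : Ebern n (fun s => a + b * f s) = a + b * Ebern n f.
Proof. by rewrite EbernD EbernZ Ebern_cst. Qed.

Hypotheses (p_ge0 : 0 <= p) (p_le1 : p <= 1).

Lemma ler_Ebern n f g : (forall s, f s <= g s) -> Ebern n f <= Ebern n g.
Proof.
elim: n f g => [|n IHn] f g fg /=; first exact: fg.
by rewrite lerD // ler_wpM2l ?subr_ge0 //; apply: IHn.
Qed.

Lemma Ebern_ge0 n f : (forall s, 0 <= f s) -> 0 <= Ebern n f.
Proof. by move=> f_ge0; rewrite -(Ebern_cst n 0); apply: ler_Ebern. Qed.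

Lemma Ebern_witness n f c : c < Ebern n f -> exists s, c < f s.
Proof.
elim: n f => [|n IHn] f /=; first by exists [::].
have [ct|] := ltP c (Ebern n (fun s => f (true :: s))).
  by have [s] := IHn _ ct; exists (true :: s).
have [cf|] := ltP c (Ebern n (fun s => f (false :: s))).
  by have [s] := IHn _ cf; exists (false :: s).
move=> hf ht hc; exfalso.
have q_ge0 : 0 <= 1 - p by rewrite subr_ge0.
have := ler_wpM2l p_ge0 ht; have := ler_wpM2l q_ge0 hf; lra.
Qed.

Lemma chebyshev_lower n (Z : seq bool -> R) mu t :
  0 < mu ^+ 2 -> 4 * t ^+ 2 <= mu ^+ 2 ->
  1 - 4 / mu ^+ 2 * Ebern n (fun s => (Z s - mu) ^+ 2)
    <= Ebern n (fun s => '1(t ^+ 2 <= Z s ^+ 2)).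
Proof.
move=> mu_gt0 t_le; rewrite -mulNr -Ebern_affine.
by apply: ler_Ebern => s; rewrite mulNr; apply: indicator_ge_cheb.
Qed.

Lemma paley_zygmund n (Z : seq bool -> R) theta w q :
  0 <= theta -> theta <= w -> 0 < q ->
  Ebern n Z = w -> Ebern n (fun s => Z s ^+ 2) <= q ->
  (w - theta) ^+ 2 / q <= Ebern n (fun s => '1(theta <= Z s)).
Proof.
move=> theta_ge0 theta_le q_gt0 EZ EZ2; set lam := (w - theta) / q.
have lam_ge0 : 0 <= lam by rewrite divr_ge0 ?subr_ge0 // ltW.
have -> : (w - theta) ^+ 2 / q = 2 * lam * (w - theta) - lam ^+ 2 * q.
  by rewrite /lam; field; rewrite gt_eqF.
apply: le_trans (ler_Ebern n (fun s => indicator_ge_pz (Z s) theta_ge0 lam_ge0)).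
pose quad s := - (2 * lam * theta) + 2 * lam * Z s + (- lam ^+ 2) * Z s ^+ 2.
rewrite (eq_Ebern _ (g := quad)); last by move=> s; rewrite /quad; ring.
rewrite EbernD Ebern_affine EbernZ EZ.
have := ler_wpM2l (sqr_ge0 lam) EZ2; lra.
Qed.

Lemma chebyshev_upper n (Z : seq bool -> R) u : 0 < u ->
  Ebern n (fun s => '1(u < Z s)) <= Ebern n (fun s => Z s ^+ 2) / u ^+ 2.
Proof.
move=> u_gt0; rewrite mulrC -EbernZ.
by apply: ler_Ebern => s; rewrite mulrC; apply: indicator_le_sq.
Qed.
End BernoulliExpectation.

Section SelectorSums.
Variables (R : realFieldType) (p : R).

Fixpoint selsum (c : seq R) (s : seq bool) : R :=
  match c, s with
  | x :: c', b :: s' => (if b then x else 0) + selsum c' s'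
  | _, _ => 0
  end.

Definition selmean nu c := nu + p * \sum_(x <- c) x.
Definition selvar c := \sum_(x <- c) p * (1 - p) * x ^+ 2.
Definition selvar4 c := \sum_(x <- c) p * (1 - p) * x ^+ 4.

Lemma Ebern_selsum_step e c x nu :
  Ebern p (size (x :: c)) (fun s => (nu + selsum (x :: c) s) ^+ e) =
  p * Ebern p (size c) (fun s => (nu + x + selsum c s) ^+ e)
  + (1 - p) * Ebern p (size c) (fun s => (nu + selsum c s) ^+ e).
Proof.
by congr (_ * _ + _ * _); apply: eq_Ebern => s /=; rewrite ?add0r ?addrA.
Qed.

Lemma Ebern_selsum_sq c nu :
  Ebern p (size c) (fun s => (nu + selsum c s) ^+ 2) = selmean nu c ^+ 2 + selvar c.
Proof.
elim: c nu => [|x c IHc] nu; first by rewrite /selmean /selvar /= !big_nil; ring.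
by rewrite Ebern_selsum_step !IHc /selmean /selvar !big_cons; ring.
Qed.

Lemma Ebern_selsum_4 c nu :
  Ebern p (size c) (fun s => (nu + selsum c s) ^+ 4) =
  selmean nu c ^+ 4 + 6 * selmean nu c ^+ 2 * selvar c
  + 4 * selmean nu c * \sum_(x <- c) p * (1 - p) * (1 - 2 * p) * x ^+ 3
  + 3 * selvar c ^+ 2 + \sum_(x <- c) p * (1 - p) * (1 - 6 * (p * (1 - p))) * x ^+ 4.
Proof.
elim: c nu => [|x c IHc] nu; first by rewrite /selmean /selvar /= !big_nil; ring.
by rewrite Ebern_selsum_step !IHc /selmean /selvar !big_cons; ring.
Qed.

Hypotheses (p_ge0 : 0 <= p) (p_le1 : p <= 1).

Lemma bernoulli_var_ge0 : 0 <= p * (1 - p).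
Proof. by rewrite mulr_ge0 ?subr_ge0. Qed.

Lemma Ebern_selsum_4_le c nu :
  Ebern p (size c) (fun s => (nu + selsum c s) ^+ 4) <=
  selmean nu c ^+ 4 + 13 / 2 * selmean nu c ^+ 2 * selvar c
  + 3 * selvar c ^+ 2 + 9 * selvar4 c.
Proof.
rewrite Ebern_selsum_4; set mu := selmean nu c; set v := p * (1 - p).
have v_ge0 : 0 <= v := bernoulli_var_ge0.
have skew : 4 * mu * \sum_(x <- c) v * (1 - 2 * p) * x ^+ 3
            <= 1 / 2 * mu ^+ 2 * selvar c + 8 * selvar4 c.
  rewrite /selvar /selvar4 -/v !mulr_sumr -big_split /=; apply: ler_sum => x _.
  (* q := 1 - 2p: 4 mu q x^3 = mu^2 x^2 / 2 + 8 q^2 x^4 - x^2 (mu - 4 q x)^2 / 2, q^2 <= 1 *)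
  have q_le1 : 0 <= 1 - (1 - 2 * p) ^+ 2 by have := bernoulli_var_ge0; lra.
  have := mulr_ge0 v_ge0 (mulr_ge0 (sqr_ge0 x) (sqr_ge0 (mu - 4 * (1 - 2 * p) * x))).
  have := mulr_ge0 v_ge0 (mulr_ge0 q_le1 (sqr_ge0 (x ^+ 2))).
  lra.
have kurt : \sum_(x <- c) v * (1 - 6 * v) * x ^+ 4 <= selvar4 c.
  rewrite /selvar4 -/v; apply: ler_sum => x _; apply: ler_wpM2r; first exact: exprn_even_ge0.
  have := sqr_ge0 v; lra.
lra.
Qed.

Lemma selvar_ge0 c : 0 <= selvar c.
Proof. by apply: sumr_ge0 => x _; rewrite mulr_ge0 ?bernoulli_var_ge0 ?sqr_ge0. Qed.

Lemma selvar4_le c beta : (forall x, x \in c -> x ^+ 2 <= beta) ->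
  selvar4 c <= beta * selvar c.
Proof.
move=> c_le; rewrite /selvar4 /selvar mulr_sumr !big_seq; apply: ler_sum => x /c_le x_le.
have := ler_wpM2l (mulr_ge0 bernoulli_var_ge0 (sqr_ge0 x)) x_le.
by rewrite (exprD x 2 2); lra.
Qed.

Lemma Ebern_selsum_centered c nu :
  Ebern p (size c) (fun s => (nu + selsum c s - selmean nu c) ^+ 2) = selvar c.
Proof.
rewrite (eq_Ebern _ _ (g := fun s => (nu - selmean nu c + selsum c s) ^+ 2)); last first.
  by move=> s; ring.
by rewrite Ebern_selsum_sq /selmean; ring.
Qed.

Lemma selsum_hit_cheb c nu t :
  0 < selmean nu c ^+ 2 -> 16 * selvar c <= selmean nu c ^+ 2 ->
  4 * t ^+ 2 <= selmean nu c ^+ 2 ->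
  3 / 4 <= Ebern p (size c) (fun s => '1(t ^+ 2 <= (nu + selsum c s) ^+ 2)).
Proof.
move=> mu_gt0 var_le t_le.
apply: le_trans (chebyshev_lower p_ge0 p_le1 (size c) (fun s => nu + selsum c s) mu_gt0 t_le).
rewrite Ebern_selsum_centered.
have : 4 / selmean nu c ^+ 2 * selvar c <= 1 / 4.
  by rewrite mulrAC ler_pdivrMr //; lra.
lra.
Qed.

Lemma selsum_hit_pz c nu t :
  0 < selvar c -> 512 * selvar4 c <= selvar c ^+ 2 -> 1024 * t ^+ 2 <= selvar c ->
  8 / 25 <= Ebern p (size c) (fun s => '1(t ^+ 2 <= (nu + selsum c s) ^+ 2)).
Proof.
set u := selmean nu c ^+ 2; set v := selvar c => var_gt0 var4_le t_le.
have u_ge0 : 0 <= u := sqr_ge0 _.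
have w_gt0 : 0 < u + v by lra.
set q := u ^+ 2 + 13 / 2 * u * v + 3 * v ^+ 2 + 9 * selvar4 c.
have var4_ge0 : 0 <= selvar4 c.
  by apply: sumr_ge0 => x _; rewrite mulr_ge0 ?bernoulli_var_ge0 ?exprn_even_ge0.
have q_gt0 : 0 < q.
  have := sqr_ge0 u; have := mulr_ge0 u_ge0 (ltW var_gt0); have := exprn_gt0 2 var_gt0.
  rewrite /q; lra.
have q_le : q <= 49 / 16 * (u + v) ^+ 2.
  by have := sqr_ge0 (u - v / 8); have := sqr_ge0 u; have := sqr_ge0 v; rewrite /q; lra.
have t_le' : t ^+ 2 <= u + v by have := sqr_ge0 t; lra.
apply: le_trans (paley_zygmund p_ge0 p_le1 (sqr_ge0 t) t_le' q_gt0 _ _).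
- rewrite ler_pdivlMr //; have := sqr_ge0 t; nra.
- exact: Ebern_selsum_sq.
- rewrite (eq_Ebern _ _ (g := fun s => (nu + selsum c s) ^+ 4)); last first.
    by move=> s; rewrite -exprM.
  by apply: le_trans (Ebern_selsum_4_le _ _) _; rewrite /q /u -exprM.
Qed.

(* Either the variance is small against the squared mean, and Chebyshev applies to [nu],
   or the summands are small against the variance, so that the fourth moment is at most
   49/16 times the squared second moment and Paley-Zygmund applies to [nu] and [nu']. *)
Lemma selsum_hit_either d a t c nu nu' : 0 < d -> d <= 1 -> 0 < a ->
  (forall x, x \in c -> x ^+ 2 * 2 ^+ 27 <= d ^+ 3 * a ^+ 2) ->
  t ^+ 2 * 2 ^+ 28 <= d ^+ 4 * a ^+ 2 ->
  d ^+ 2 * a ^+ 2 <= 2 ^+ 14 * selmean nu c ^+ 2 ->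
  16 / 25 <= Ebern p (size c) (fun s => '1(t ^+ 2 <= (nu + selsum c s) ^+ 2))
            + Ebern p (size c) (fun s => '1(t ^+ 2 <= (nu' + selsum c s) ^+ 2)).
Proof.
move=> d_gt0 d_le1 a_gt0 c_small t_small.
set D := d ^+ 2 * a ^+ 2; set mu2 := selmean nu c ^+ 2 => mu_large.
have D_gt0 : 0 < D by rewrite mulr_gt0 ?exprn_gt0.
have dn_le1 n : d ^+ n <= 1 := exprn_ile1 n (ltW d_gt0) d_le1.
have d4_le : d ^+ 4 * a ^+ 2 <= D.
  by rewrite (exprD d 2 2) -mulrA; exact: ler_piMl (ltW D_gt0) (dn_le1 2%N).
have d3_le : d ^+ 3 * a ^+ 2 <= D.
  by rewrite (exprD d 1 2) -mulrA; exact: ler_piMl (ltW D_gt0) (dn_le1 1%N).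
have var4_le : selvar4 c <= d ^+ 3 * a ^+ 2 / 2 ^+ 27 * selvar c.
  by apply: selvar4_le => x /c_small x_le; rewrite ler_pdivlMr ?exprn_gt0.
have var_ge0 := selvar_ge0 c.
have [var_small|var_large] := lerP (16 * selvar c) mu2.
  have mu_gt0 : 0 < mu2 by lra.
  have t_le : 4 * t ^+ 2 <= mu2 by lra.
  have := selsum_hit_cheb mu_gt0 var_small t_le.
  have : 0 <= Ebern p (size c) (fun s => '1(t ^+ 2 <= (nu' + selsum c s) ^+ 2)).
    by apply: Ebern_ge0 => // s; apply: ler0n.
  lra.
have var_gt0 : 0 < selvar c by lra.
have var4_small : 512 * selvar4 c <= selvar c ^+ 2.
  have := ler_wpM2r var_ge0 d3_le; have := ler_wpM2r var_ge0 mu_large.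
  have := ler_wpM2r var_ge0 (ltW var_large); lra.
have t_le : 1024 * t ^+ 2 <= selvar c by lra.
have := selsum_hit_pz nu var_gt0 var4_small t_le.
have := selsum_hit_pz nu' var_gt0 var4_small t_le.
lra.
Qed.

Lemma selsum_hit_pair d a b t c : p = d / 32 -> 0 < d -> d <= 1 -> 0 < a ->
  (forall x, x \in c -> x ^+ 2 * 2 ^+ 27 <= d ^+ 3 * a ^+ 2) ->
  t ^+ 2 * 2 ^+ 28 <= d ^+ 4 * a ^+ 2 ->
  a ^+ 2 <= (b + \sum_(x <- c) x) ^+ 2 ->
  16 / 25 <= Ebern p (size c) (fun s => '1(t ^+ 2 <= selsum c s ^+ 2))
            + Ebern p (size c) (fun s => '1(t ^+ 2 <= (b + selsum c s) ^+ 2)).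
Proof.
move=> p_def d_gt0 d_le1 a_gt0 c_small t_small abS.
have p_gt0 : 0 < p by rewrite p_def; lra.
have pa : d ^+ 2 * a ^+ 2 = 2 ^+ 10 * (p * a) ^+ 2 by rewrite p_def; field.
rewrite (eq_Ebern _ _ (g := fun s => '1(t ^+ 2 <= (0 + selsum c s) ^+ 2))); last first.
  by move=> s; rewrite add0r.
have hit nu' := selsum_hit_either nu' d_gt0 d_le1 a_gt0 c_small t_small.
have [mean0|meanb] := mean_dichotomy p_gt0 p_le1 a_gt0 abS.
  by apply: hit; rewrite /selmean add0r; lra.
by rewrite addrC; apply: hit; rewrite /selmean; lra.
Qed.

Lemma selsum_ones_tail k u : 0 < u ->
  Ebern p k (fun s => '1(p * k%:R + u < selsum (nseq k 1) s)) <= p * k%:R / u ^+ 2.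
Proof.
move=> u_gt0.
have sum_ones : \sum_(x <- nseq k 1) x = k%:R :> R.
  by elim: k {u_gt0} => [|k IHk]; rewrite ?big_nil // big_cons IHk mulrS.
have var_ones : selvar (nseq k 1) <= p * k%:R.
  elim: k {u_gt0 sum_ones} => [|k IHk]; first by rewrite /selvar big_nil mulr0.
  rewrite /selvar big_cons -/(selvar _) mulrS expr1n mulr1.
  by have := bernoulli_var_ge0; have := mulr_ge0 p_ge0 p_ge0; lra.
rewrite (eq_Ebern _ _ (g := fun s => '1(u < - (p * k%:R) + selsum (nseq k 1) s))); last first.
  by move=> s; rewrite [- _ + _]addrC ltrBrDl.
apply: le_trans (chebyshev_upper p_ge0 p_le1 _ _ u_gt0) _.
have := Ebern_selsum_sq (nseq k 1) (- (p * k%:R)).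
rewrite size_nseq /selmean sum_ones addNr expr0n add0r => ->.
by rewrite ler_pM2r ?invr_gt0 ?exprn_gt0.
Qed.
End SelectorSums.

Section Counting.
Variable R : realFieldType.

Lemma natr_count (I : Type) (a : pred I) (r : seq I) :
  (count a r)%:R = \sum_(i <- r) '1(a i) :> R.
Proof. by rewrite -sumn_count sumnE big_map natr_sum. Qed.

Lemma natr_card (I : finType) (A : {pred I}) : #|A|%:R = \sum_(i : I) '1(i \in A) :> R.
Proof.
rewrite -sum1_card natr_sum big_mkcond /=.
by apply: eq_bigr => i _; case: (i \in A).
Qed.

Lemma selsum_nth (c : seq R) s :
  selsum c s = \sum_(i < size c) (if nth false s i then c`_i else 0).
Proof.
elim: c s => [|x c IHc] [|b s] /=; rewrite ?big_ord0 //.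
  by rewrite big1 // => i _; rewrite nth_nil.
by rewrite big_ord_recl IHc.
Qed.

Lemma selsum_enum k (F : 'I_k -> R) s :
  selsum [seq F j | j <- enum 'I_k] s = \sum_(j < k) (if nth false s j then F j else 0).
Proof.
rewrite selsum_nth size_map size_enum_ord; apply: eq_bigr => j _.
by rewrite (nth_map j) ?size_enum_ord // nth_ord_enum.
Qed.

Lemma Ebern_many_hits (p : R) n m r (ok : pred (seq bool))
    (g1 g2 : 'I_m -> pred (seq bool)) eps rho :
  0 <= p -> p <= 1 -> (0 < m)%N -> (4 * r <= m)%N -> 1 / 2 < rho - 2 * eps ->
  Ebern p n (fun s => '1(~~ ok s)) <= eps ->
  (forall l, rho <= Ebern p n (fun s => '1(g1 l s)) + Ebern p n (fun s => '1(g2 l s))) ->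
  exists s, ok s /\ ((r <= count (g1^~ s) (enum 'I_m)) || (r <= count (g2^~ s) (enum 'I_m)))%N.
Proof.
move=> p_ge0 p_le1 m_gt0 r_le rho_gt eps_ge rho_le.
pose hits s : R := \sum_(l <- enum 'I_m) ('1(g1 l s) + '1(g2 l s)).
have hits_lower s :
    \sum_(l <- enum 'I_m) ('1(g1 l s) + '1(g2 l s) + (-2) * '1(~~ ok s)) <= '1(ok s) * hits s.
  rewrite /hits; case: (ok s) => /=; first by rewrite mul1r; apply: ler_sum => l _; lra.
  rewrite mul0r; apply: sumr_le0 => l _.
  by case: (g1 l s); case: (g2 l s) => /=; lra.
have mean_hits : 2 * r%:R < Ebern p n (fun s => '1(ok s) * hits s).
  apply: lt_le_trans (ler_Ebern p_ge0 p_le1 n hits_lower).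
  rewrite Ebern_sum; apply: lt_le_trans (_ : \sum_(l <- enum 'I_m) (rho - 2 * eps) <= _).
    rewrite big_enum sumr_const card_ord -mulr_natr.
    have : (4 * r)%:R <= m%:R :> R by rewrite ler_nat.
    have : 0 < m%:R :> R by rewrite ltr0n.
    rewrite natrM; nra.
  apply: ler_sum => l _; rewrite !EbernD EbernZ.
  have := rho_le l; lra.
have [s] := Ebern_witness p_ge0 p_le1 mean_hits.
rewrite /hits; case ok_s: (ok s) => /=; last by rewrite mul0r; have := ler0n R r; lra.
rewrite mul1r big_split /= -!natr_count -natrD -natrM ltr_nat => r_lt.
exists s; split => //.
by have [//|n1_lt] /= := leqP r (count (g1^~ s) (enum 'I_m)); lia.
Qed.
End Counting.

Section OrderStatistics.
Variable R : realDomainType.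

Lemma min_coord_le m (v : 'cV[R]_m) l : min_coord v <= v l 0.
Proof.
rewrite /min_coord; set s := [seq v i 0 | i <- enum 'I_m].
have : v l 0 \in s by apply: map_f; rewrite mem_enum.
elim: s (head 0 s) => [|x s IHs] h //=.
by rewrite inE ge_min => /orP[/eqP->|/(IHs h)->]; rewrite ?lexx ?orbT.
Qed.

Lemma absvE m (v : 'cV[R]_m) l : absv v l 0 = `|v l 0|.
Proof. by rewrite mxE. Qed.

Lemma max_abs_entry_ge m k (T : 'M[R]_(m, k)) i j : `|T i j| <= max_abs_entry T.
Proof.
by apply: le_trans (le_bigmax _ _ i); exact: (le_bigmax _ (fun j => `|T i j|) j).
Qed.

Lemma max_abs_entry_ge0 m k (T : 'M[R]_(m, k)) : 0 <= max_abs_entry T.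
Proof.
have max_ge0 (x y : R) : 0 <= x -> 0 <= y -> 0 <= Num.max x y.
  by move=> x_ge0 _; rewrite le_max x_ge0.
apply: (big_ind (fun x => 0 <= x)) => // i _.
exact: (big_ind (fun x => 0 <= x)).
Qed.

Lemma sorted_nth_ge (s : seq R) (t : R) r : sorted (fun x y => y <= x) s -> (0 < r)%N ->
  (r <= count (fun x => (t <= x)%R) s)%N -> t <= nth 0 s r.-1.
Proof.
elim: s r => [|x s IHs] [|[|r]] //= s_sorted _ r_le.
  have : has (fun x => t <= x) (x :: s) by rewrite has_count (leq_trans _ r_le).
  case/hasP=> z; rewrite inE => /orP[/eqP-> //|z_in tz].
  have := order_path_min (fun y x z (yx : y <= x) (zy : z <= y) => le_trans zy yx) s_sorted.
  by move/allP/(_ z z_in); apply: le_trans.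
apply: (IHs r.+1) => //; first exact: path_sorted s_sorted.
by move: r_le; case: (t <= x) => //= /ltnW.
Qed.

Lemma kth_max_ge m r (v : 'cV[R]_m) (t : R) : (0 < r)%N ->
  (r <= count (fun l => (t <= v l 0)%R) (enum 'I_m))%N -> t <= kth_max r v.
Proof.
move=> r_gt0 r_le; apply: sorted_nth_ge => //.
  by apply: sort_sorted => x y; exact: le_total.
by rewrite (permP (permEl (perm_sort _ _))) count_map.
Qed.

Lemma kth_max_absv_ge m r (v : 'cV[R]_m) (t : R) (P : pred 'I_m) :
  (0 < r)%N -> 0 <= t -> (r <= count P (enum 'I_m))%N ->
  (forall l, P l -> t ^+ 2 <= v l 0 ^+ 2) -> t <= kth_max r (absv v).
Proof.
move=> r_gt0 t_ge0 r_le P_hit.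
apply: kth_max_ge r_gt0 (leq_trans r_le (sub_count _ _)) => l /P_hit.
by rewrite absvE -(real_normK (num_real (v l 0))) ler_sqr ?nnegrE ?normr_ge0.
Qed.

Lemma kth_max_absv_ge0 m r (v : 'cV[R]_m) : 0 <= kth_max r (absv v).
Proof.
rewrite /kth_max; set s := sort _ _.
have s_ge0 : all (fun x => 0 <= x) s.
  by rewrite all_sort all_map; apply/allP => l _; rewrite /= absvE.
have [r_lt|r_ge] := ltnP r.-1 (size s); last by rewrite nth_default.
exact: (allP s_ge0) _ (mem_nth 0 r_lt).
Qed.
End OrderStatistics.

Section RandomRestriction.
Variables (R : realFieldType) (d : R) (k m : nat) (T : 'M[R]_(m, k)) (y : 'cV[R]_k).
Hypotheses (d_gt0 : 0 < d) (d_le1 : d <= 1) (dk_ge12 : 12 <= d * k%:R).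
Hypotheses (m_ge4 : (4 <= m)%N) (y_sphere : on_sphere y).
Let a := min_coord (absv (T *m y)).
Hypotheses (a_gt0 : 0 < a).
Hypothesis T_small : max_abs_entry T ^+ 2 * 2 ^+ 28 <= d ^+ 4 * a ^+ 2 * k%:R.

Let X := d * k%:R.
Let B := [set j : 'I_k | 2 <= y j 0 ^+ 2 * X].
Let row (l : 'I_m) := [seq if j \in B then 0 else T l j * y j 0 | j <- enum 'I_k].
Let rowB (l : 'I_m) := \sum_(j in B) T l j * y j 0.
Let sel (s : seq bool) := [set j : 'I_k | nth false s j && (j \notin B)].

Lemma card_large_coords : #|B|%:R * 2 <= X.
Proof.
rewrite natr_card mulr_suml.
apply: le_trans (_ : (\sum_(j < k) y j 0 ^+ 2) * X <= _); last by rewrite y_sphere mul1r.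
rewrite mulr_suml; apply: ler_sum => j _.
rewrite inE; have [|_] /= := leP 2 (y j 0 ^+ 2 * X); first by rewrite mul1r.
by rewrite mul0r mulr_ge0 ?sqr_ge0 // /X; have := dk_ge12; lra.
Qed.

Lemma row_small l x : x \in row l -> x ^+ 2 * 2 ^+ 27 <= d ^+ 3 * a ^+ 2.
Proof.
case/mapP=> j _ ->; case: ifP => [_|].
  by rewrite expr0n mul0r mulr_ge0 ?exprn_ge0 ?sqr_ge0 ?ltW.
rewrite inE => /negbT; rewrite -ltNge => y_small.
have T_le : T l j ^+ 2 <= max_abs_entry T ^+ 2.
  rewrite -(real_normK (num_real (T l j))) ler_sqr ?nnegrE ?normr_ge0 ?max_abs_entry_ge0 //.
  exact: max_abs_entry_ge.
have y2_ge0 := sqr_ge0 (y j 0).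
have := ler_wpM2r y2_ge0 T_le; have := ler_wpM2r y2_ge0 T_small.
have := ler_wpM2l (mulr_ge0 (exprn_ge0 3 (ltW d_gt0)) (sqr_ge0 a)) (ltW y_small).
have := d_gt0; rewrite /X; lra.
Qed.

Lemma row_total l : a ^+ 2 <= (rowB l + \sum_(x <- row l) x) ^+ 2.
Proof.
have -> : rowB l + \sum_(x <- row l) x = (T *m y) l 0.
  rewrite big_map big_enum /= /rowB big_mkcond -big_split mxE /=.
  by apply: eq_bigr => j _; case: ifP; rewrite ?addr0 ?add0r.
have := min_coord_le (absv (T *m y)) l; rewrite absvE -/a => a_le.
by rewrite -(real_normK (num_real ((T *m y) l 0))) ler_sqr ?nnegrE ?normr_ge0 // ltW.
Qed.

Lemma sel_card_le s : #|sel s|%:R <= selsum (nseq k (1 : R)) s.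
Proof.
rewrite natr_card selsum_nth size_nseq; apply: ler_sum => j _.
by rewrite inE nth_nseq ltn_ord; case: (nth false s j) => //=; case: (j \in B).
Qed.

Lemma sel_card_tail : Ebern (d / 32) k (fun s => '1(~~ (#|sel s|%:R <= X / 2))) <= 3 / 250.
Proof.
have X_ge12 : 12 <= X := dk_ge12.
have p_ge0 : 0 <= d / 32 by have := d_gt0; lra.
have p_le1 : d / 32 <= 1 by have := d_le1; lra.
have mean : d / 32 * k%:R = X / 32 by rewrite /X; ring.
have u_gt0 : 0 < 15 * X / 32 by lra.
pose tail s := '1(d / 32 * k%:R + 15 * X / 32 < selsum (nseq k 1) s) : R.
apply: le_trans (_ : Ebern (d / 32) k tail <= _).
  apply: ler_Ebern => // s; rewrite /tail mean -ltNge.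
  have [card_gt|] //= := ltP (X / 2) (#|sel s|%:R).
  by have := sel_card_le s; case: ltP => //=; lra.
apply: le_trans (selsum_ones_tail p_ge0 p_le1 k u_gt0) _.
rewrite mean ler_pdivrMr ?exprn_gt0 //.
by have := ler_wpM2l (le_trans (ler0n R 12) X_ge12) X_ge12; lra.
Qed.

Lemma coordproj_sel l s : (T *m coordproj (sel s) y) l 0 = selsum (row l) s.
Proof.
rewrite mxE selsum_enum; apply: eq_bigr => j _; rewrite mxE inE.
by case: (nth false s j); case: (j \in B); rewrite /= ?mulr0.
Qed.

Lemma coordproj_Bsel l s :
  (T *m coordproj (B :|: sel s) y) l 0 = rowB l + selsum (row l) s.
Proof.
rewrite mxE selsum_enum /rowB [\sum_(j in B) _]big_mkcond -big_split.
apply: eq_bigr => j _.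
rewrite mxE in_setU [j \in sel s]inE.
by case: (nth false s j); case: (j \in B); rewrite /= ?mulr0 ?addr0 ?add0r.
Qed.

Lemma restriction_exists : exists J : {set 'I_k}, #|J|%:R <= X /\
  (2 ^+ 14)^-1 * d ^+ 2 * a <= kth_max (m %/ 4) (absv (T *m coordproj J y)).
Proof.
set t := (2 ^+ 14)^-1 * d ^+ 2 * a; set r := (m %/ 4)%N.
have p_ge0 : 0 <= d / 32 by have := d_gt0; lra.
have p_le1 : d / 32 <= 1 by have := d_le1; lra.
have t_ge0 : 0 <= t by rewrite /t mulr_ge0 ?mulr_ge0 ?sqr_ge0 ?invr_ge0 ?exprn_ge0 // ltW.
have t_small : t ^+ 2 * 2 ^+ 28 <= d ^+ 4 * a ^+ 2.
  by rewrite (_ : t ^+ 2 * _ = d ^+ 4 * a ^+ 2) // /t; field.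
have hits l : 16 / 25 <= Ebern (d / 32) k (fun s => '1(t ^+ 2 <= selsum (row l) s ^+ 2))
    + Ebern (d / 32) k (fun s => '1(t ^+ 2 <= (rowB l + selsum (row l) s) ^+ 2)).
  have := selsum_hit_pair p_ge0 p_le1 erefl d_gt0 d_le1 a_gt0 (@row_small l) t_small
    (row_total l).
  by rewrite /row size_map size_enum_ord.
have r_gt0 : (0 < r)%N by rewrite divn_gt0.
have r_le : (4 * r <= m)%N by rewrite mulnC leq_trunc_div.
have m_gt0 : (0 < m)%N by apply: leq_trans m_ge4.
have rho_gt : 1 / 2 < 16 / 25 - 2 * (3 / 250) :> R by lra.
have [s [card_s]] := Ebern_many_hits p_ge0 p_le1 m_gt0 r_le rho_gt sel_card_tail hits.
have B_card := card_large_coords.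
case/orP=> [hit1|hit2].
  exists (sel s); split; first by move: card_s; have := dk_ge12; rewrite /X; lra.
  by apply: kth_max_absv_ge r_gt0 t_ge0 hit1 _ => l /=; rewrite coordproj_sel.
exists (B :|: sel s); split.
  apply: le_trans (_ : (#|B| + #|sel s|)%:R <= _); first by rewrite ler_nat cardsU leq_subr.
  by rewrite natrD; move: card_s B_card; rewrite /X; lra.
by apply: kth_max_absv_ge r_gt0 t_ge0 hit2 _ => l /=; rewrite coordproj_Bsel.
Qed.
End RandomRestriction.

Lemma sqr_le_mul_sqrt (R : rcfType) (x t c : R) :
  0 <= x -> 0 <= c -> x < t * Num.sqrt c -> x ^+ 2 <= t ^+ 2 * c.
Proof.
move=> x_ge0 c_ge0 x_lt; rewrite -(sqr_sqrtr c_ge0) -exprMn ler_sqr ?nnegrE ?(ltW x_lt) //.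
exact: le_trans x_ge0 (ltW x_lt).
Qed.

Theorem lemma4p1 (R : realType) :
  exists C : R, 0 < C /\
  forall (delta : R) (k m : nat) (T : 'M[R]_(m, k)) (y : 'cV[R]_k),
    0 < delta -> delta <= 1 ->
    12 / delta ^+ 2 <= k%:R ->
    (4 <= m)%N ->
    on_sphere y ->
    exists J : {set 'I_k},
      (#|J|%:R <= delta * k%:R) /\
      C^-1 * delta ^+ 2 * min_coord (absv (T *m y))
        <= max_abs_entry T / Num.sqrt (k%:R)
           + kth_max (m %/ 4) (absv (T *m coordproj J y)).
Proof.
exists (2 ^+ 14); split; first exact: exprn_gt0.
move=> d k m T y d_gt0 d_le1 k_ge m_ge4 y_sphere.
set a := min_coord _; set M := max_abs_entry T; set sk := Num.sqrt k%:R.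
set t := (2 ^+ 14)^-1 * d ^+ 2 * a.
have dk_ge12 : 12 <= d * k%:R.
  rewrite ler_pdivrMr ?exprn_gt0 // expr2 in k_ge.
  by have := ler_wpM2l (ler0n R k) (ler_piMl (ltW d_gt0) d_le1); lra.
have k_gt0 : 0 < k%:R :> R by have := ler_wpM2r (ler0n R k) d_le1; lra.
have sk_gt0 : 0 < sk by rewrite sqrtr_gt0.
have M_ge0 : 0 <= M := max_abs_entry_ge0 T.
have [small|large] := lerP t (M / sk).
  exists set0; split; first by rewrite cards0 mulr_ge0 ?ltW.
  by have := kth_max_absv_ge0 (m %/ 4) (T *m coordproj set0 y); lra.
have t_gt0 : 0 < t := le_lt_trans (divr_ge0 M_ge0 (ltW sk_gt0)) large.
have a_gt0 : 0 < a by move: t_gt0; rewrite /t pmulr_rgt0 // mulr_gt0 ?invr_gt0 ?exprn_gt0.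
have T_small : M ^+ 2 * 2 ^+ 28 <= d ^+ 4 * a ^+ 2 * k%:R.
  have t_sq : t ^+ 2 * 2 ^+ 28 = d ^+ 4 * a ^+ 2 by rewrite /t; field.
  rewrite -t_sq [leRHS]mulrAC ler_pM2r ?exprn_gt0 //.
  by apply: sqr_le_mul_sqrt => //; rewrite -ltr_pdivrMr.
have [J [J_card J_hit]] := restriction_exists d_gt0 d_le1 dk_ge12 m_ge4 y_sphere a_gt0 T_small.
by exists J; split => //; apply: le_trans J_hit _; rewrite lerDr divr_ge0 // ltW.
Qed.
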